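(* Let $G$ be a finite simple graph, $r\geqslant 1$, let $\mathcal{C}$ be a minimal $r$-system of chorded cycles in $G$, and let $C\in\mathcal{C}$. Suppose the subgraph $H$ of $G$ induced by the vertices not lying on any cycle of $\mathcal{C}$ contains a path $x_1x_2x_3\cdots x_\ell$ with $\ell\geqslant 4$. Then (1) $d_C(x_1,x_3)+d_C(x_1,x_4)+d_C(x_2,x_4)\leqslant 12$; and, if $\ell\geqslant 5$, (2) $d_C(x_1,x_3)+d_C(x_2,x_4)+d_C(x_3,x_5)\leqslant 12$; (3) if moreover $x_2x_4\in E(G)$, then $d_C(x_1,x_3)+d_C(x_1,x_4)+d_C(x_2,x_5)\leqslant 12$.
   Context: A chorded cycle is a cycle together with an edge of the graph, not on the cycle, joining two vertices of the cycle. A minimal $r$-system of chorded cycles in $G$ is a collection of $r$ pairwise vertex-disjoint chorded cycles of $G$ whose total number of vertices is as small as possible among all such collections. For vertices $x,y$, $d_C(x,y)=|(N_G(x)\cup N_G(y))\cap V(C)|$. *)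

From mathcomp Require Import all_boot.
Set Implicit Arguments. Unset Strict Implicit. Unset Printing Implicit Defensive.

Section Defs.
Variable T : finType.
Variable e : rel T.

Definition simple_graph : Prop := symmetric e /\ irreflexive e.

Definition is_cycle (c : seq T) : bool :=
  [&& uniq c, 2 < size c & cycle e c].

Definition chorded_cycle (c : seq T) : bool :=
  is_cycle c &&
  [exists x : T, exists y : T,
     [&& x \in c, y \in c, e x y, y != next c x & x != next c y]].

Definition r_system (r : nat) (F : 'I_r -> seq T) : Prop :=
  (forall i, chorded_cycle (F i)) /\
  (forall i j, i != j -> [disjoint F i & F j]).

Definition total_vertices (r : nat) (F : 'I_r -> seq T) : nat :=
  \sum_(i < r) size (F i).

Definition minimal_r_system (r : nat) (F : 'I_r -> seq T) : Prop :=
  r_system F /\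
  forall F' : 'I_r -> seq T, r_system F' -> total_vertices F <= total_vertices F'.

Definition dC (c : seq T) (x y : T) : nat :=
  #|[set v : T | (v \in c) && (e x v || e y v)]|.

Definition outside (r : nat) (F : 'I_r -> seq T) (v : T) : bool :=
  [forall i : 'I_r, v \notin F i].

Definition path_in_H (r : nat) (F : 'I_r -> seq T) (x1 : T) (s : seq T) : bool :=
  [&& uniq (x1 :: s), path e x1 s & all (outside F) (x1 :: s)].

End Defs.

(* If |C| <= 4, every d_C is at most 4.  If a vertex v of H had three
   neighbours X, Y, Z on C, then v, X, the arc of C from X to Y, Y, the arc
   from Y to Z and Z form a cycle with chord vY; minimality bounds |C| by its
   length, and adding the three such bounds gives |C| <= 6.  So for |C| >= 7
   every vertex of H has at most two neighbours on C and again d_C <= 4.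
   For |C| in {5, 6} the situation is finite: after rotating C so that its
   chord starts at position 0, all possible adjacencies between the path and C
   are enumerated, and every configuration violating a bound is shown by
   computation to contain a chorded cycle shorter than C, which contradicts
   minimality. *)

From mathcomp Require Import all_boot zify.
Set Implicit Arguments. Unset Strict Implicit. Unset Printing Implicit Defensive.

Lemma next_cat_cons (T : eqType) (s1 s2 : seq T) x y :
  uniq (s1 ++ x :: y :: s2) -> next (s1 ++ x :: y :: s2) x = y.
Proof.
move=> u; rewrite next_nth mem_cat mem_head orbT.
have xs1 : x \notin s1 by move: u; rewrite cat_uniq /= => /and3P [_ /norP []].
rewrite index_cat (negbTE xs1) /= eqxx addn0.
by case: s1 {u} xs1 => [|z s1] //= _; rewrite nth_cat ltnNge leqnSn /= subSnn.
Qed.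

Lemma next_nth_uniq (T : eqType) (s : seq T) x0 k :
  uniq s -> k < size s -> next s (nth x0 s k) = nth x0 s (k.+1 %% size s).
Proof.
case: s => [|y p] // us ks; rewrite next_nth mem_nth // (index_uniq x0) //.
have [lt|ge] := ltnP k (size p); first by rewrite modn_small //= (set_nth_default y).
have -> : k = size p by apply/eqP; rewrite eqn_leq ge -ltnS ks.
by rewrite modnn nth_default.
Qed.

Lemma next_map_in (T1 T2 : eqType) (f : T1 -> T2) (s : seq T1) x :
  {in s &, injective f} -> uniq s -> x \in s -> next (map f s) (f x) = f (next s x).
Proof.
move=> inj u xs; rewrite !next_nth map_f // xs.
have -> : index (f x) (map f s) = index x s.
  have lt_s : index (f x) (map f s) < size s by rewrite -(size_map f) index_mem map_f.
  by rewrite -[in RHS](nth_index_map x inj xs) index_uniq.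
case: s {inj u} xs => [|z s] //= _.
have [lt|ge] := ltnP (index x (z :: s)) (size s); first by rewrite (nth_map z).
by rewrite !nth_default ?size_map.
Qed.

Lemma dC_le_nbrs (T : finType) (e : rel T) (c : seq T) x y :
  dC e c x y <= #|[set u in c | e x u]| + #|[set u in c | e y u]|.
Proof.
rewrite /dC (_ : [set v | _] = [set u in c | e x u] :|: [set u in c | e y u]).
  exact: leq_card_setU.
by apply/setP => u; rewrite !inE andb_orr.
Qed.

Lemma dC_count (T : finType) (e : rel T) (c : seq T) x y :
  uniq c -> dC e c x y = count (fun v => e x v || e y v) c.
Proof.
move=> uc; rewrite /dC -size_filter -(card_uniqP (filter_uniq _ uc)).
by apply: eq_card => v; rewrite in_set mem_filter andbC.
Qed.

Lemma eq_dC (T : finType) (e : rel T) (c1 c2 : seq T) x y :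
  c1 =i c2 -> dC e c1 x y = dC e c2 x y.
Proof. by move=> c12; apply: eq_card => v; rewrite !inE c12. Qed.

Section MinimalSystem.

Variables (T : finType) (e : rel T) (r : nat) (F : 'I_r -> seq T).
Hypotheses (sym_e : symmetric e) (minF : minimal_r_system e F).

Lemma system_ucycle k : ucycle e (F k).
Proof.
by case: minF => [[Fch _] _]; case/andP: (Fch k) => /and3P [uF _ cF]; rewrite /ucycle cF uF.
Qed.

Lemma outside_notin v k : outside F v -> v \notin F k.
Proof. by move/forallP. Qed.

Lemma minimal_size_le k c :
  chorded_cycle e c -> {subset c <= [pred v | (v \in F k) || outside F v]} ->
  size (F k) <= size c.
Proof.
case: minF => [[Fch Fdis] Fmin] cch csub.
pose F' l := if l == k then c else F l.
have c_dis l : l != k -> [disjoint c & F l].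
  move=> lk; rewrite disjoint_has; apply/hasPn => v /csub /orP [vk|vo] /=.
    by rewrite (disjointFr (Fdis k l _) vk) // eq_sym.
  exact: outside_notin.
have F'sys : r_system e F'.
  split=> [l|l l' ll']; rewrite /F'; first by case: ifP.
  case: ifPn => [/eqP lk|lk]; case: ifPn => [/eqP l'k|l'k].
  - by rewrite lk l'k eqxx in ll'.
  - by rewrite c_dis // eq_sym.
  - by rewrite disjoint_sym c_dis.
  - exact: Fdis.
have := Fmin F' F'sys.
rewrite /total_vertices (bigD1 k) //= [X in _ <= X -> _](bigD1 k) //= {1}/F' eqxx.
rewrite [X in _ <= _ + X -> _](eq_bigr (size \o F)) ?leq_add2r // => l /negbTE l_k.
by rewrite /F' l_k.
Qed.

Lemma chorded_fan v X Y Z P1 P2 :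
  uniq (v :: X :: P1 ++ Y :: P2 ++ [:: Z]) -> path e X (P1 ++ Y :: P2 ++ [:: Z]) ->
  e v X -> e v Y -> e v Z -> chorded_cycle e (v :: X :: P1 ++ Y :: P2 ++ [:: Z]).
Proof.
move=> uP pP eX eY eZ; have /andP [vP /andP [XP _]] := uP.
have YX : Y != X by apply: contraNneq XP => <-; rewrite mem_cat mem_head orbT.
have YP : Y \in X :: P1 ++ Y :: P2 ++ [:: Z] by rewrite inE mem_cat mem_head !orbT.
have lastP : last X (P1 ++ Y :: P2 ++ [:: Z]) = Z by rewrite last_cat /= last_cat.
apply/andP; split.
  by rewrite /is_cycle uP /= size_cat /= addnS eX /= rcons_path pP lastP sym_e eZ.
apply/existsP; exists v; apply/existsP; exists Y.
have -> : next (v :: X :: P1 ++ Y :: P2 ++ [:: Z]) v = X by rewrite /= eqxx.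
rewrite mem_head inE YP orbT eY YX.
have -> : v :: X :: P1 ++ Y :: P2 ++ [:: Z] =
          (v :: X :: P1) ++ Y :: head Z P2 :: behead (P2 ++ [:: Z]) by case: (P2).
rewrite next_cat_cons; last by case: (P2) uP.
apply: contraNneq vP => ->; rewrite inE mem_cat; case: (P2) => [|w P2'] /=;
  by rewrite !(inE, mem_cat) eqxx !orbT.
Qed.

Lemma fan_size_le k v X Y Z Q1 Q2 Q3 :
  perm_eq (X :: Q1 ++ Y :: Q2 ++ Z :: Q3) (F k) -> cycle e (X :: Q1 ++ Y :: Q2 ++ Z :: Q3) ->
  outside F v -> e v X -> e v Y -> e v Z -> size (F k) <= size Q1 + size Q2 + 4.
Proof.
set c := X :: _ => cF cyc vo eX eY eZ.
have c_eq : c = (X :: Q1 ++ Y :: Q2 ++ [:: Z]) ++ Q3 by rewrite /c /= -catA /= -catA.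
have uc : uniq c by rewrite (perm_uniq cF) (ucycle_uniq (system_ucycle k)).
have vc : v \notin c by rewrite (perm_mem cF) outside_notin.
have -> : size Q1 + size Q2 + 4 = size (v :: X :: Q1 ++ Y :: Q2 ++ [:: Z]).
  by rewrite /= !size_cat /= size_cat /=; lia.
apply: minimal_size_le.
  apply: chorded_fan => //.
    by move: uc vc; rewrite c_eq cat_uniq mem_cat negb_or /= => /andP [-> _] /andP [-> _].
  by move: cyc; rewrite c_eq /= rcons_cat cat_path => /andP [].
move=> w; rewrite inE => /predU1P [-> |wc]; first by rewrite inE /= vo orbT.
by rewrite inE /= -(perm_mem cF) c_eq mem_cat wc.
Qed.

Lemma three_arcs_size_le6 k v X Y Z Q1 Q2 Q3 :
  perm_eq (X :: Q1 ++ Y :: Q2 ++ Z :: Q3) (F k) -> cycle e (X :: Q1 ++ Y :: Q2 ++ Z :: Q3) ->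
  outside F v -> e v X -> e v Y -> e v Z -> size (F k) <= 6.
Proof.
set c := X :: _ => cF cyc vo eX eY eZ.
have rotY : rot (size (X :: Q1)) c = Y :: Q2 ++ Z :: Q3 ++ X :: Q1.
  by rewrite rot_size_cat /= -catA.
have rotZ : rot (size (X :: Q1 ++ Y :: Q2)) c = Z :: Q3 ++ X :: Q1 ++ Y :: Q2.
  by rewrite [c](_ : _ = (X :: Q1 ++ Y :: Q2) ++ Z :: Q3) ?rot_size_cat //= -catA.
have bX := fan_size_le cF cyc vo eX eY eZ.
have bY : size (F k) <= size Q2 + size Q3 + 4.
  apply: (fan_size_le (Q1 := Q2) (Q2 := Q3) (Q3 := Q1) _ _ vo eY eZ eX);
  by rewrite -rotY ?perm_rot ?rot_cycle.
have bZ : size (F k) <= size Q3 + size Q1 + 4.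
  apply: (fan_size_le (Q1 := Q3) (Q2 := Q1) (Q3 := Q2) _ _ vo eZ eX eY);
  by rewrite -rotZ ?perm_rot ?rot_cycle.
move: bX bY bZ; rewrite -(perm_size cF) /c /= !size_cat /= size_cat /=; lia.
Qed.

Lemma outside_three_nbrs_size_le6 k v a b c :
  outside F v -> a \in F k -> b \in F k -> c \in F k -> a != b -> b != c -> c != a ->
  e v a -> e v b -> e v c -> size (F k) <= 6.
Proof.
move=> vo ak bk ck ab bc ca ea eb ec.
have cycF := ucycle_cycle (system_ucycle k).
case: (rot_to ak) => i s rotF.
have perm_s : perm_eq (a :: s) (F k) by rewrite -rotF perm_rot.
have cyc_s : cycle e (a :: s) by rewrite -rotF rot_cycle.
have bs : b \in s by move: bk; rewrite -(perm_mem perm_s) inE eq_sym (negbTE ab).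
have cs : c \in s by move: ck; rewrite -(perm_mem perm_s) inE (negbTE ca).
move: perm_s cyc_s cs; case/splitPr: bs => s1 s2.
rewrite mem_cat inE eq_sym (negbTE bc) /= => + + /orP [cs1|cs2].
- case/splitPr: cs1 => q1 q2; rewrite -catA /= => pS cS.
  exact: (three_arcs_size_le6 pS cS vo ea ec eb).
- case/splitPr: cs2 => q1 q2 pS cS.
  exact: (three_arcs_size_le6 pS cS vo ea eb ec).
Qed.

Lemma outside_nbrs_le2 k v :
  7 <= size (F k) -> outside F v -> #|[set u in F k | e v u]| <= 2.
Proof.
move=> big vo; rewrite leqNgt; apply/card_gt2P => [[a [b [c [[ak bk ck] [ab bc ca]]]]]].
rewrite !inE in ak bk ck; case/andP: ak => ak ea; case/andP: bk => bk eb; case/andP: ck => ck ec.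
by have := outside_three_nbrs_size_le6 vo ak bk ck ab bc ca ea eb ec; rewrite leqNgt big.
Qed.

Lemma outside_dC_le4 k u v :
  (size (F k) <= 4) || (7 <= size (F k)) -> outside F u -> outside F v -> dC e (F k) u v <= 4.
Proof.
move=> /orP [small|big] ou ov.
  apply: leq_trans small; apply: leq_trans (card_size (F k)).
  by apply/subset_leq_card/subsetP => w; rewrite inE => /andP [].
apply: leq_trans (dC_le_nbrs _ _ _ _) _.
by rewrite -[4]/(2 + 2) leq_add // outside_nbrs_le2.
Qed.

End MinimalSystem.

(* Nested [if]s instead of [&&] keep the tests lazy under [vm_compute],
   which evaluates both arguments of [andb]. *)
Definition chorded_cycleb (T : eqType) (adj : rel T) (s : seq T) : bool :=
  if uniq s then if 2 < size s then if cycle adj s then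
    has (fun x => has (fun y =>
      if adj x y then if y != next s x then x != next s y else false else false) s) s
  else false else false else false.

Lemma chorded_cycleb_map (T1 : eqType) (T2 : finType) (adj : rel T1) (e : rel T2)
    (f : T1 -> T2) (s : seq T1) :
  {in s &, injective f} -> {in s &, forall u v, adj u v -> e (f u) (f v)} ->
  chorded_cycleb adj s -> chorded_cycle e (map f s).
Proof.
move=> inj adj_e; rewrite /chorded_cycleb.
case: ifP => // us; case: ifP => // ss; case: ifP => // cs /hasP [x xs /hasP [y ys]].
case: ifP => // adj_xy; case: ifP => // y_nx x_ny.
apply/andP; split.
  rewrite /is_cycle (map_inj_in_uniq inj) us size_map ss cycle_map /=.
  by apply: (sub_in_cycle (P := mem s)) cs => //; apply/allP.
apply/existsP; exists (f x); apply/existsP; exists (f y).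
rewrite !map_f // adj_e //= !next_map_in //.
by rewrite (inj_in_eq inj) ?mem_next // y_nx (inj_in_eq inj) ?mem_next.
Qed.

Definition cycle_chord_adj (m d u v : nat) : bool :=
  [|| v == u.+1 %% m, u == v.+1 %% m, (u == 0) && (v == d) | (u == d) && (v == 0)].

(* Vertices 0 .. m-1 form the cycle with chord {0, d}; vertex m + t is the
   t-th path vertex, [rs] gives its adjacencies to the cycle and [xe] the edges
   between path vertices. *)
Definition config_adj (m d : nat) (rs : seq (seq bool)) (xe : seq (nat * nat)) : rel nat :=
  fun u v =>
  if u < m then (if v < m then cycle_chord_adj m d u v else nth false (nth [::] rs (v - m)) u)
  else if v < m then nth false (nth [::] rs (u - m)) v
  else ((u - m, v - m) \in xe) || ((v - m, u - m) \in xe).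

Fixpoint grow_paths (n : nat) (adj : rel nat) (k : nat) (p : seq nat) : seq (seq nat) :=
  match k, p with
  | 0, _ => [:: p]
  | k'.+1, h :: _ =>
      flatten [seq grow_paths n adj k' (w :: p) |
                 w <- iota 0 n & if adj h w then w \notin p else false]
  | _, [::] => [::]
  end.

(* Paths of 4 to m-1 vertices starting at a path vertex: a shorter chorded
   cycle must use a path vertex, the cycle alone having a single chord. *)
Definition short_cycle_candidates (n : nat) (adj : rel nat) (m : nat) : seq (seq nat) :=
  flatten [seq flatten [seq grow_paths n adj k [:: s] | k <- iota 3 (m - 4)] | s <- iota m (n - m)].

Definition has_short_chorded_cycle (m d : nat) (rs : seq (seq bool)) (xe : seq (nat * nat)) :=
  let adj := config_adj m d rs xe in
  has (fun s => if size s < m then chorded_cycleb adj s else false)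
    (short_cycle_candidates (m + size rs) adj m).

Lemma grow_paths_bounded n adj k p :
  all (fun u => u < n) p -> all (all (fun u => u < n)) (grow_paths n adj k p).
Proof.
elim: k p => [|k IH] [|h p] //= p_lt; rewrite ?p_lt //.
apply/allP => s /flatten_mapP [w]; rewrite mem_filter mem_iota /= => /andP [_ w_lt].
by move: s; apply/allP; apply: IH; rewrite /= w_lt.
Qed.

Lemma short_cycle_candidates_bounded n adj m :
  all (all (fun u => u < n)) (short_cycle_candidates n adj m).
Proof.
apply/allP => s /flatten_mapP [s0]; rewrite mem_iota => /andP [s0m s0n] /flatten_mapP [k _].
by move: s; apply/allP; apply: grow_paths_bounded; rewrite /= andbT; lia.
Qed.

Fixpoint bool_rows (m : nat) : seq (seq bool) :=
  if m is m'.+1 then [seq b :: r | b <- [:: false; true], r <- bool_rows m'] else [:: [::]].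

Lemma mem_bool_rows m r : size r = m -> r \in bool_rows m.
Proof.
elim: m r => [|m IH] [|b r] // [/IH r_m].
by apply: (allpairs_f (fun b r => b :: r)) r_m; case: b.
Qed.

Definition admissible_rows (m d : nat) : seq (seq bool) :=
  [seq r <- bool_rows m | ~~ has_short_chorded_cycle m d [:: r] [::]].

Definition admissible_succs (m d : nat) (r : seq bool) : seq (seq bool) :=
  [seq r' <- admissible_rows m d | ~~ has_short_chorded_cycle m d [:: r; r'] [:: (0, 1)]].

Definition lookup (A B : eqType) (tab : seq (A * seq B)) (a : A) : seq B :=
  odflt [::] (omap snd (ohead [seq p <- tab | p.1 == a])).

Lemma lookup_graph (A B : eqType) (f : A -> seq B) (s : seq A) a :
  a \in s -> lookup [seq (b, f b) | b <- s] a = f a.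
Proof.
rewrite /lookup; elim: s => [|b s IH] //=; rewrite inE.
by have [<- //|_ /= /IH] := eqVneq a b.
Qed.

Fixpoint all_row_paths (succ : seq bool -> seq (seq bool)) (P : pred (seq (seq bool)))
    (k : nat) (acc : seq (seq bool)) (r : seq bool) : bool :=
  if k is k'.+1 then all (all_row_paths succ P k' (r :: acc)) (succ r)
  else P (rev (r :: acc)).

Lemma all_row_paths_sound succ P k acc r rs :
  all_row_paths succ P k acc r -> size rs = k -> path (fun r r' => r' \in succ r) r rs ->
  P (rev acc ++ r :: rs).
Proof.
elim: rs k acc r => [|r' rs IH] [|k] acc r //=; first by rewrite rev_cons cats1.
move=> /allP all_succ [size_rs] /andP [r'_succ p_rs].
by rewrite -cat1s catA cats1 -rev_cons; apply: IH p_rs; first exact: all_succ.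
Qed.

Definition union_count (r1 r2 : seq bool) : nat := count id [seq p.1 || p.2 | p <- zip r1 r2].

Definition path_edges (k : nat) : seq (nat * nat) := [seq (t, t.+1) | t <- iota 0 k.-1].

(* Every sequence of rows that a path of k vertices of H can realise against
   the cycle (consecutive rows being admissible successors) satisfies the bound
   on the pairs [ps], unless it yields a chorded cycle shorter than the cycle. *)
Definition config_check (m d k : nat) (xe ps : seq (nat * nat)) : bool :=
  let tab := [seq (r, admissible_succs m d r) | r <- admissible_rows m d] in
  let row_sum rs := sumn [seq union_count (nth [::] rs p.1) (nth [::] rs p.2) | p <- ps] in
  all (all_row_paths (lookup tab)
         (fun rs => if row_sum rs <= 12 then true
                    else if all (fun p => nth [::] rs p.2 \in lookup tab (nth [::] rs p.1)) xe
                    then has_short_chorded_cycle m d rs (path_edges k ++ xe) else true)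
         k.-1 [::]) (admissible_rows m d).

(* The three claims, with x_1, ..., x_k indexed from 0: the length k, the
   edges assumed besides those of the path, and the pairs whose d_C are summed. *)
Definition path_patterns : seq (nat * seq (nat * nat) * seq (nat * nat)) :=
  [:: (4, [::], [:: (0, 2); (0, 3); (1, 3)]);
      (5, [::], [:: (0, 2); (1, 3); (2, 4)]);
      (5, [:: (1, 3)], [:: (0, 2); (0, 3); (1, 4)])].

Lemma path_patternsP k xe ps :
  (k, xe, ps) \in path_patterns -> size ps = 3 /\ all (fun p => (p.1 < k) && (p.2 < k)) (xe ++ ps).
Proof. by rewrite !inE => /or3P [] /eqP [-> -> ->]. Qed.

Definition small_cycle_check (m : nat) : bool :=
  all (fun d => all (fun '(k, xe, ps) => config_check m d k xe ps) path_patterns)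
    (iota 2 (m - 3)).

Lemma small_cycle_check56 : small_cycle_check 5 && small_cycle_check 6.
Proof. vm_cast_no_check (erefl true). Qed.

Definition nbr_rows (T : Type) (e : rel T) (a xs : seq T) : seq (seq bool) :=
  [seq [seq e x y | y <- a] | x <- xs].

Definition config_vertex (T : Type) (a xs : seq T) (y0 : T) (u : nat) : T :=
  if u < size a then nth y0 a u else nth y0 xs (u - size a).

Lemma union_count_map (T : Type) (e : rel T) (a : seq T) x y :
  union_count [seq e x v | v <- a] [seq e y v | v <- a] = count (fun v => e x v || e y v) a.
Proof. by rewrite /union_count zip_map -map_comp count_map. Qed.

Section Configurations.

Variables (T : finType) (e : rel T) (r : nat) (F : 'I_r -> seq T) (k : 'I_r).
Variables (a : seq T) (d : nat) (x0 : T).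
Hypotheses (sym_e : symmetric e) (irr_e : irreflexive e) (minF : minimal_r_system e F).
Hypotheses (perm_a : perm_eq a (F k)) (cyc_a : cycle e a).
Hypotheses (d_lt : d < size a) (chord : e (nth x0 a 0) (nth x0 a d)).

Let uniq_a : uniq a.
Proof. by rewrite (perm_uniq perm_a) (ucycle_uniq (system_ucycle minF k)). Qed.

Lemma config_adj_sound y0 xs xe u v :
  {in xe, forall p, e (nth y0 xs p.1) (nth y0 xs p.2)} ->
  u < size a + size xs -> v < size a + size xs ->
  config_adj (size a) d (nbr_rows e a xs) xe u v ->
  e (config_vertex a xs y0 u) (config_vertex a xs y0 v).
Proof.
move=> xe_e u_lt v_lt; rewrite /config_adj /config_vertex.
have cycle_edge w : w < size a -> e (nth y0 a w) (nth y0 a (w.+1 %% size a)).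
  by move=> w_lt; rewrite -next_nth_uniq //; apply: next_cycle; rewrite ?mem_nth.
have row_lt w : w < size a + size xs -> ~~ (w < size a) -> w - size a < size xs.
  by rewrite -leqNgt; lia.
case: ifPn => u_a; case: ifPn => v_a.
- have chord' : e (nth y0 a 0) (nth y0 a d).
    by rewrite (set_nth_default x0) ?(leq_ltn_trans _ d_lt) // (set_nth_default x0 y0 d_lt).
  case/or4P => [/eqP -> | /eqP -> | /andP [/eqP -> /eqP ->] | /andP [/eqP -> /eqP ->]] //.
  + exact: cycle_edge.
  + by rewrite sym_e; apply: cycle_edge.
  + by rewrite sym_e.
- by rewrite /nbr_rows (nth_map y0) ?(row_lt v) // (nth_map y0) // sym_e.
- by rewrite /nbr_rows (nth_map y0) ?(row_lt u) // (nth_map y0).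
- by case/orP => /xe_e //; rewrite sym_e.
Qed.

Lemma config_vertex_inj y0 xs :
  uniq xs -> all (outside F) xs ->
  {in [pred u | u < size a + size xs] &, injective (config_vertex a xs y0)}.
Proof.
move=> uxs oxs u v; rewrite !inE /config_vertex => u_lt v_lt.
have xs_a w : w < size xs -> nth y0 xs w \notin a.
  by move=> w_lt; rewrite (perm_mem perm_a) outside_notin //; apply: (allP oxs); rewrite mem_nth.
case: ifPn => u_a; case: ifPn => v_a.
- by move/eqP; rewrite nth_uniq // => /eqP.
- by move=> uv; have := xs_a (v - size a); rewrite -uv mem_nth //; lia.
- by move=> uv; have := xs_a (u - size a); rewrite uv mem_nth //; lia.
- by move/eqP; rewrite nth_uniq //; try lia; move/eqP; lia.
Qed.

Lemma no_short_chorded_config y0 xs xe :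
  uniq xs -> all (outside F) xs -> {in xe, forall p, e (nth y0 xs p.1) (nth y0 xs p.2)} ->
  has_short_chorded_cycle (size a) d (nbr_rows e a xs) xe = false.
Proof.
move=> uxs oxs xe_e; apply/negP => /hasP [s s_cand]; case: ifP => // s_small.
have s_lt : all (fun u => u < size a + size xs) s.
  by have := allP (short_cycle_candidates_bounded _ _ _) _ s_cand; rewrite size_map.
have s_in : {subset s <= [pred u | u < size a + size xs]} by move=> u; apply: (allP s_lt).
set f := config_vertex a xs y0.
move/(chorded_cycleb_map (e := e) (f := f)).
have inj := config_vertex_inj (y0 := y0) uxs oxs.
move/(_ (sub_in2 s_in inj) (fun u v us vs => config_adj_sound xe_e (s_in u us) (s_in v vs))).
suff sub_F : {subset map f s <= [pred v | (v \in F k) || outside F v]}.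
  by move/(minimal_size_le minF)/(_ sub_F); rewrite size_map -(perm_size perm_a) leqNgt s_small.
move=> _ /mapP [u /s_in u_lt ->]; rewrite inE /f /config_vertex; case: ifPn => u_a.
  by rewrite -(perm_mem perm_a) mem_nth.
by rewrite (allP oxs) ?orbT // mem_nth //; move: u_lt u_a; rewrite inE -leqNgt; lia.
Qed.

Lemma nbr_row_admissible y :
  outside F y -> [seq e y v | v <- a] \in admissible_rows (size a) d.
Proof.
move=> oy; rewrite mem_filter mem_bool_rows ?size_map // andbT.
by rewrite (no_short_chorded_config (y0 := y) (xs := [:: y]) (xe := [::])) //= oy.
Qed.

Lemma nbr_row_succ y z :
  outside F y -> outside F z -> e y z ->
  [seq e z v | v <- a] \in admissible_succs (size a) d [seq e y v | v <- a].
Proof.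
move=> oy oz eyz; rewrite mem_filter nbr_row_admissible // andbT.
rewrite (no_short_chorded_config (y0 := y) (xs := [:: y; z]) (xe := [:: (0, 1)])) //=.
- by rewrite inE andbT; apply: contraTneq eyz => ->; rewrite irr_e.
- by rewrite oy oz.
- by move=> p; rewrite inE => /eqP ->.
Qed.

Lemma config_check_sound x xs xe ps :
  config_check (size a) d (size xs).+1 xe ps ->
  all (fun p => (p.1 <= size xs) && (p.2 <= size xs)) (xe ++ ps) ->
  path_in_H e F x xs -> {in xe, forall p, e (nth x (x :: xs) p.1) (nth x (x :: xs) p.2)} ->
  \sum_(p <- ps) dC e a (nth x (x :: xs) p.1) (nth x (x :: xs) p.2) <= 12.
Proof.
set ys := x :: xs => chk idx_lt /and3P [uys pxs oys] xe_e.
pose row y := [seq e y v | v <- a].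
pose tab := [seq (r, admissible_succs (size a) d r) | r <- admissible_rows (size a) d].
have row_nth i : i <= size xs -> nth [::] (nbr_rows e a ys) i = row (nth x ys i).
  by move=> i_lt; rewrite (nth_map x).
have row_succ y z : outside F y -> outside F z -> e y z -> row z \in lookup tab (row y).
  by move=> oy oz eyz; rewrite lookup_graph ?nbr_row_admissible ?nbr_row_succ.
have ys_out y : y \in ys -> outside F y by apply: (allP oys).
have path_rows : path (fun r r' => r' \in lookup tab r) (row x) (map row xs).
  rewrite path_map; apply: (sub_in_path (P := mem ys)) pxs; last exact/allP.
  by move=> y z /ys_out oy /ys_out oz /row_succ; apply.
have := allP chk _ (nbr_row_admissible (ys_out x (mem_head x xs))).
move/all_row_paths_sound/(_ (size_map row xs) path_rows).
rewrite [rev [::] ++ _](_ : _ = nbr_rows e a ys) //.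
have idx_xe p : p \in xe -> (p.1 <= size xs) && (p.2 <= size xs).
  by move=> p_xe; apply: (allP idx_lt); rewrite mem_cat p_xe.
have idx_ps p : p \in ps -> (p.1 <= size xs) && (p.2 <= size xs).
  by move=> p_ps; apply: (allP idx_lt); rewrite mem_cat p_ps orbT.
rewrite sumnE big_map big_seq [in X in _ -> X]big_seq.
rewrite (eq_bigr (fun p => dC e a (nth x ys p.1) (nth x ys p.2))); last first.
  by move=> p /idx_ps /andP [p1 p2]; rewrite !row_nth // union_count_map dC_count.
case: leqP => // _.
have -> : all (fun p => nth [::] (nbr_rows e a ys) p.2
                          \in lookup tab (nth [::] (nbr_rows e a ys) p.1)) xe.
  apply/allP => p p_xe; have /andP [p1 p2] := idx_xe p p_xe.
  by rewrite !row_nth //; apply: row_succ (xe_e p p_xe); apply: ys_out; apply: mem_nth.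
rewrite (no_short_chorded_config (y0 := x)) // => p; rewrite mem_cat => /orP [|/xe_e //].
case/mapP => t; rewrite mem_iota => /andP [_ t_lt] ->.
by move/(pathP x): pxs; apply.
Qed.

End Configurations.

Lemma chorded_cycle_rot_chord (T : finType) (e : rel T) (c : seq T) x0 :
  irreflexive e -> chorded_cycle e c ->
  exists n d, 1 < d < (size c).-1 /\ e (nth x0 (rot n c) 0) (nth x0 (rot n c) d).
Proof.
move=> irr /andP [/and3P [uc c_gt2 _] /existsP [x /existsP [y /and5P [xc yc exy y_nx x_ny]]]].
case: (rot_to xc) => n s rot_c; exists n, (index y (x :: s)); rewrite rot_c.
have us : uniq (x :: s) by rewrite -rot_c rot_uniq.
have size_s : size (x :: s) = size c by rewrite -rot_c size_rot.
have ys : y \in x :: s by rewrite -rot_c mem_rot.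
have next_s z : next c z = next (x :: s) z by rewrite -rot_c next_rot.
set d := index y (x :: s); have nth_d : nth x0 (x :: s) d = y := nth_index x0 ys.
have d_lt : d < size c by rewrite -size_s index_mem.
have d0 : d != 0 by apply: contraTneq exy => d0; rewrite -nth_d d0 irr.
have d1 : d != 1.
  apply: contra y_nx => /eqP d1; rewrite next_s -[x]/(nth x0 (x :: s) 0).
  by rewrite next_nth_uniq ?size_s ?modn_small -?d1 ?nth_d //; lia.
have d_last : d != (size c).-1.
  apply: contra x_ny => /eqP d_last; rewrite next_s -nth_d next_nth_uniq ?size_s //.
  by rewrite d_last prednK ?modnn //; lia.
by rewrite nth_d; split => //; lia.
Qed.

Lemma pattern_dC_sum_le12 (T : finType) (e : rel T) r (F : 'I_r -> seq T) k x xs xe ps :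
  simple_graph e -> minimal_r_system e F -> ((size xs).+1, xe, ps) \in path_patterns ->
  path_in_H e F x xs -> {in xe, forall p, e (nth x (x :: xs) p.1) (nth x (x :: xs) p.2)} ->
  \sum_(p <- ps) dC e (F k) (nth x (x :: xs) p.1) (nth x (x :: xs) p.2) <= 12.
Proof.
move=> [sym irr] minF pat pH xe_e.
have [ps3 idx_lt] := path_patternsP pat.
have nth_out i : outside F (nth x (x :: xs) i).
  have /and3P [_ _ oys] := pH.
  apply: (allP oys); case: (ltnP i (size (x :: xs))) => [/mem_nth -> //|/(nth_default x) ->].
  exact: mem_head.
have [small_or_big|mid] := boolP ((size (F k) <= 4) || (7 <= size (F k))).
  rewrite (_ : 12 = 4 * size ps); last by rewrite ps3.
  elim: (ps) => [|p ps' IH]; rewrite ?big_nil // big_cons mulnS.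
  by apply: (leq_add _ IH); apply: outside_dC_le4.
have [[Fch _] _] := minF.
have [n [d [d_rng chord]]] := chorded_cycle_rot_chord x irr (Fch k).
have perm_a : perm_eq (rot n (F k)) (F k) by rewrite perm_rot.
have cyc_a : cycle e (rot n (F k)) by rewrite rot_cycle (ucycle_cycle (system_ucycle minF k)).
have size_a : size (rot n (F k)) = size (F k) := size_rot n (F k).
have chk : small_cycle_check (size (rot n (F k))).
  have /andP [chk5 chk6] := small_cycle_check56.
  have : (size (F k) == 5) || (size (F k) == 6) by move: mid; lia.
  by rewrite size_a => /orP [] /eqP ->.
have d_lt : d < size (rot n (F k)) by rewrite size_a; lia.
rewrite (eq_bigr (fun p => dC e (rot n (F k)) (nth x (x :: xs) p.1) (nth x (x :: xs) p.2))).
  apply: (config_check_sound sym irr minF perm_a cyc_a d_lt chord (xe := xe)) => //.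
  have d_in : d \in iota 2 (size (rot n (F k)) - 3) by rewrite mem_iota size_a; lia.
  exact: allP (allP chk d d_in) _ pat.
by move=> p _; apply: eq_dC => v; rewrite mem_rot.
Qed.

Lemma path_in_H_take (T : finType) (e : rel T) r (F : 'I_r -> seq T) x s n :
  path_in_H e F x s -> path_in_H e F x (take n s).
Proof.
case/and3P => us pxs oxs; apply/and3P; split.
- by rewrite -[x :: _]/(take n.+1 (x :: s)) take_uniq.
- exact: take_path.
- by apply/allP => y; rewrite -[x :: _]/(take n.+1 (x :: s)) => /mem_take /(allP oxs).
Qed.

Lemma path_dC_sum_le12 (T : finType) (e : rel T) r (F : 'I_r -> seq T) k x s n xe ps :
  simple_graph e -> minimal_r_system e F -> (n.+1, xe, ps) \in path_patterns -> n <= size s ->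
  path_in_H e F x s -> {in xe, forall p, e (nth x (x :: s) p.1) (nth x (x :: s) p.2)} ->
  \sum_(p <- ps) dC e (F k) (nth x (x :: s) p.1) (nth x (x :: s) p.2) <= 12.
Proof.
move=> simple minF pat n_le pH xe_e.
have idx_le p : p \in xe ++ ps -> (p.1 <= n) && (p.2 <= n).
  by apply: (allP (path_patternsP pat).2).
have nth_take_n i : i <= n -> nth x (x :: take n s) i = nth x (x :: s) i.
  by move=> i_le; rewrite -[x :: _]/(take n.+1 (x :: s)) nth_take.
rewrite big_seq (eq_bigr (fun p => dC e (F k) (nth x (x :: take n s) p.1)
                                               (nth x (x :: take n s) p.2))) -?big_seq.
  apply: (@pattern_dC_sum_le12 _ _ _ F k x (take n s) xe) => //.
  - by rewrite size_takel.
  - exact: path_in_H_take.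
  - move=> p p_xe; have /andP [p1 p2] : (p.1 <= n) && (p.2 <= n).
      by apply: idx_le; rewrite mem_cat p_xe.
    by rewrite !nth_take_n //; apply: xe_e.
move=> p p_ps; have /andP [p1 p2] : (p.1 <= n) && (p.2 <= n).
  by apply: idx_le; rewrite mem_cat p_ps orbT.
by rewrite !nth_take_n.
Qed.

Theorem lemma3p4 (T : finType) (e : rel T) (r : nat) (F : 'I_r -> seq T)
    (i : 'I_r) (x1 : T) (s : seq T) :
  simple_graph e -> 1 <= r -> minimal_r_system e F ->
  path_in_H e F x1 s -> 4 <= size (x1 :: s) ->
  let x k := nth x1 (x1 :: s) k.-1 in
  let C := F i in
  dC e C (x 1) (x 3) + dC e C (x 1) (x 4) + dC e C (x 2) (x 4) <= 12 /\
  (5 <= size (x1 :: s) ->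
     dC e C (x 1) (x 3) + dC e C (x 2) (x 4) + dC e C (x 3) (x 5) <= 12 /\
     (e (x 2) (x 4) ->
        dC e C (x 1) (x 3) + dC e C (x 1) (x 4) + dC e C (x 2) (x 5) <= 12)).
Proof.
move=> simple _ minF pH size4 x C.
have bound n xe ps : (n.+1, xe, ps) \in path_patterns -> n <= size s ->
    {in xe, forall p, e (nth x1 (x1 :: s) p.1) (nth x1 (x1 :: s) p.2)} ->
    \sum_(p <- ps) dC e C (nth x1 (x1 :: s) p.1) (nth x1 (x1 :: s) p.2) <= 12.
  by move=> pat n_le; exact: (path_dC_sum_le12 i simple minF pat n_le pH).
have sum3 (f : nat * nat -> nat) p1 p2 p3 : \sum_(p <- [:: p1; p2; p3]) f p = f p1 + f p2 + f p3.
  by rewrite !big_cons big_nil addn0 addnA.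
split; first by move: (bound 3 [::] [:: (0, 2); (0, 3); (1, 3)]); rewrite sum3; apply.
move=> size5; split; first by move: (bound 4 [::] [:: (0, 2); (1, 3); (2, 4)]); rewrite sum3; apply.
move=> e24; move: (bound 4 [:: (1, 3)] [:: (0, 2); (0, 3); (1, 4)]); rewrite sum3; apply => //.
by move=> p; rewrite inE => /eqP ->.
Qed.
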